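(* Let $\{P_i\}_{i=1}^M$ be a POVM on a finite-dimensional Hilbert space $\mathcal H$ with all $P_i\neq0$, and let $\mathcal N_i(\rho)=\sqrt{P_i}\,\rho\,\sqrt{P_i}$. The instrument $\{\mathcal N_i\}_{i=1}^M$ is extremal if and only if the operators $P_1,\dots,P_M$ are linearly independent. In particular, every von Neumann–Lüders instrument (the case where the $P_i$ are nonzero mutually orthogonal projectors, $P_iP_j=\delta_{ij}P_i$) is extremal.
   Context: A POVM is a family of positive operators summing to the identity. An instrument with $M$ outcomes on $\mathcal H$ is a family of completely positive maps $\mathcal N_i:\mathcal L(\mathcal H)\to\mathcal L(\mathcal H)$ whose sum is trace preserving; extremal means an extreme point of the convex set of all such instruments with $M$ outcomes. *)

(* Finite-dimensional Hilbert space H = C^n, with C = algC. *)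
From HB Require Import structures.
From mathcomp Require Import all_boot all_order all_algebra all_field.
Set Implicit Arguments. Unset Strict Implicit. Unset Printing Implicit Defensive.
Import Order.TTheory GRing.Theory Num.Theory.
Local Open Scope ring_scope.

Definition mxadj (m p : nat) (A : 'M[algC]_(m, p)) : 'M[algC]_(p, m) :=
  (map_mx (fun x => x^*) A)^T.

Definition psd (n : nat) (A : 'M[algC]_n) : Prop :=
  forall v : 'cV[algC]_n, 0 <= (mxadj v *m A *m v) ord0 ord0.

(* positivity of a k x k block operator on C^k (x) C^n, given by its blocks *)
Definition block_psd (n k : nat) (B : 'I_k -> 'I_k -> 'M[algC]_n) : Prop :=
  forall v : 'I_k -> 'cV[algC]_n,
    0 <= (\sum_(i < k) \sum_(j < k) (mxadj (v i) *m B i j *m v j) ord0 ord0).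

Definition POVM (n M : nat) (P : 'I_M -> 'M[algC]_n) : Prop :=
  (forall i, psd (P i)) /\ \sum_(i < M) P i = 1%:M.

Definition lin_map (n : nat) (f : 'M[algC]_n -> 'M[algC]_n) : Prop :=
  forall (a : algC) (X Y : 'M[algC]_n), f (a *: X + Y) = a *: f X + f Y.

(* completely positive: id_k (x) f is positive for every k *)
Definition CP (n : nat) (f : 'M[algC]_n -> 'M[algC]_n) : Prop :=
  lin_map f /\
  forall (k : nat) (B : 'I_k -> 'I_k -> 'M[algC]_n),
    block_psd B -> block_psd (fun i j => f (B i j)).

Definition trace_preserving (n : nat) (f : 'M[algC]_n -> 'M[algC]_n) : Prop :=
  forall X : 'M[algC]_n, \tr (f X) = \tr X.

Definition instrument (n M : nat) (N : 'I_M -> 'M[algC]_n -> 'M[algC]_n) : Prop :=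
  (forall i, CP (N i)) /\ trace_preserving (fun X => \sum_(i < M) N i X).

Definition extremal_instrument (n M : nat)
    (N : 'I_M -> 'M[algC]_n -> 'M[algC]_n) : Prop :=
  instrument N /\
  forall (N1 N2 : 'I_M -> 'M[algC]_n -> 'M[algC]_n) (t : algC),
    instrument N1 -> instrument N2 -> 0 < t -> t < 1 ->
    (forall i X, N i X = t *: N1 i X + (1 - t) *: N2 i X) ->
    (forall i X, N1 i X = N i X /\ N2 i X = N i X).

Definition lin_indep (n M : nat) (P : 'I_M -> 'M[algC]_n) : Prop :=
  forall c : 'I_M -> algC, \sum_(i < M) c i *: P i = 0 -> forall i, c i = 0.

(* The Choi matrix of X |-> S X S
   is the rank-one positive block operator |S><S|, so a completely positive map f
   with t f <= sandwich S (in the CP order) is a scalar multiple c * sandwich S.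
   Hence in a decomposition N = t N' + (1 - t) N'' of the instrument we get
   N'_i = c_i N_i, and trace preservation gives sum_i c_i P_i = 1 = sum_i P_i, so
   linear independence forces c_i = 1. Conversely, a real relation
   sum_i r_i P_i = 0 exhibits N as the midpoint of the instruments (1 +- e r_i) N_i,
   so extremality forces r = 0; a complex relation splits into two real ones because
   the P_i are hermitian. *)

From HB Require Import structures.
From mathcomp Require Import all_boot all_order all_algebra all_field.
From mathcomp Require Import ring.
Set Implicit Arguments. Unset Strict Implicit. Unset Printing Implicit Defensive.
Import Order.TTheory GRing.Theory Num.Theory.
Local Open Scope ring_scope.

Lemma mxadjD m p (A B : 'M[algC]_(m, p)) : mxadj (A + B) = mxadj A + mxadj B.
Proof. by apply/matrixP => i j; rewrite !mxE rmorphD. Qed.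

Lemma mxadjZ m p a (A : 'M[algC]_(m, p)) : mxadj (a *: A) = a^* *: mxadj A.
Proof. by apply/matrixP => i j; rewrite !mxE rmorphM. Qed.

Lemma mxadj0 m p : mxadj (0 : 'M[algC]_(m, p)) = 0.
Proof. by apply/matrixP => i j; rewrite !mxE rmorph0. Qed.

Lemma mxadjM m p q (A : 'M[algC]_(m, p)) (B : 'M[algC]_(p, q)) :
  mxadj (A *m B) = mxadj B *m mxadj A.
Proof.
apply/matrixP => i j; rewrite !mxE rmorph_sum; apply: eq_bigr => k _.
by rewrite !mxE rmorphM mulrC.
Qed.

Lemma mxadj_delta m (a : 'I_m) : mxadj (delta_mx a 0 : 'cV[algC]_m) = delta_mx 0 a.
Proof. by apply/matrixP => i j; rewrite !mxE rmorph_nat andbC. Qed.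

Lemma mulmx_delta_mxE m n p (A : 'M[algC]_(m, n)) (B : 'M[algC]_(n, p)) i j x y :
  (A *m delta_mx i j *m B) x y = A x i * B j y.
Proof.
rewrite -(mul_delta_mx (0 : 'I_1)) mulmxA -colE -mulmxA -rowE mxE big_ord1.
by rewrite !mxE.
Qed.

Lemma Creal_conj_eq (x y : algC) :
  x + y \is Num.real -> 'i * (x - y) \is Num.real -> y^* = x.
Proof.
move=> /CrealP; rewrite rmorphD => Ereal /CrealP.
rewrite rmorphM /= conjCi rmorphB /= => Eimag.
have Edif : y^* - x^* = x - y.
  by apply: (mulfI (neq0Ci algC)); rewrite -Eimag; ring.
have two_neq0 : (2 : algC) != 0 by rewrite pnatr_eq0.
have -> : y^* = ((x^* + y^*) + (y^* - x^*)) / 2 by field.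
by rewrite Ereal Edif; field.
Qed.

Lemma quadratic_ge0_lin_coef_eq0 (r q : algC) : 0 <= q ->
  (forall x : algC, x \is Num.real -> 0 <= x * r + x * x * q) -> r = 0.
Proof.
move=> q_ge0 quad_ge0.
have r_real : r \is Num.real.
  have := quad_ge0 1 (rpred1 _); rewrite !mul1r => /ger0_real rq.
  by rewrite -(addrK q r) rpredB // ger0_real.
have d_gt0 : 0 < q + 1 by rewrite ltr_wpDl.
have d_neq0 : q + 1 != 0 by rewrite gt_eqF.
have x_real : - r / (q + 1) \is Num.real.
  by apply: realM; rewrite ?realN ?realV // gtr0_real.
have := quad_ge0 _ x_real.
have -> : - r / (q + 1) * r + - r / (q + 1) * (- r / (q + 1)) * q = - (r / (q + 1)) ^+ 2.
  by field.
rewrite oppr_ge0 => sq_le0.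
have : (r / (q + 1)) ^+ 2 == 0.
  by rewrite eq_le sq_le0 -realEsqr realM // realV gtr0_real.
by rewrite sqrf_eq0 mulf_eq0 invr_eq0 (negbTE d_neq0) orbF => /eqP.
Qed.

Section BlockForm.
Variables k n : nat.
Implicit Types (F G : 'I_k -> 'I_k -> 'M[algC]_n) (u v w : 'I_k -> 'cV[algC]_n).

Definition block_form F v w : algC :=
  \sum_(i < k) \sum_(j < k) (mxadj (v i) *m F i j *m w j) ord0 ord0.

Definition vcomb v w (a : algC) : 'I_k -> 'cV[algC]_n := fun i => v i + a *: w i.

Lemma block_form_combr F v w1 w2 a :
  block_form F v (vcomb w1 w2 a) = block_form F v w1 + a * block_form F v w2.
Proof.
rewrite /block_form /vcomb mulr_sumr -big_split; apply: eq_bigr => i _.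
rewrite mulr_sumr -big_split; apply: eq_bigr => j _.
by rewrite mulmxDr -scalemxAr !mxE.
Qed.

Lemma block_form_combl F v1 v2 w a :
  block_form F (vcomb v1 v2 a) w = block_form F v1 w + a^* * block_form F v2 w.
Proof.
rewrite /block_form /vcomb mulr_sumr -big_split; apply: eq_bigr => i _.
rewrite mulr_sumr -big_split; apply: eq_bigr => j _.
by rewrite mxadjD mxadjZ !mulmxDl -!scalemxAl !mxE.
Qed.

Lemma block_form_comb F v w a :
  block_form F (vcomb v w a) (vcomb v w a) =
  block_form F v v + a * block_form F v w +
  a^* * (block_form F w v + a * block_form F w w).
Proof. by rewrite block_form_combl !block_form_combr. Qed.

Lemma block_formDZ F G a b v w :
  block_form (fun i j => a *: F i j + b *: G i j) v w =
  a * block_form F v w + b * block_form G v w.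
Proof.
rewrite /block_form !mulr_sumr -big_split; apply: eq_bigr => i _.
rewrite !mulr_sumr -big_split; apply: eq_bigr => j _.
by rewrite mulmxDr mulmxDl -!scalemxAr -!scalemxAl !mxE.
Qed.

Lemma eq_block_form F G v w :
  (forall i j, F i j = G i j) -> block_form F v w = block_form G v w.
Proof. by move=> eFG; apply: eq_bigr => i _; apply: eq_bigr => j _; rewrite eFG. Qed.

Lemma block_form_conj F v w : block_psd F -> (block_form F w v)^* = block_form F v w.
Proof.
move=> F_psd; set x := block_form F v w; set y := block_form F w v.
set p := block_form F v v; set q := block_form F w w.
have real_p : p \is Num.real by apply/ger0_real/F_psd.
have real_q : q \is Num.real by apply/ger0_real/F_psd.
have real_at a : p + a * x + a^* * (y + a * q) \is Num.real.
  by rewrite -block_form_comb; apply/ger0_real/F_psd.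
apply: Creal_conj_eq.
  have -> : x + y = p + 1 * x + 1^* * (y + 1 * q) - p - q by rewrite rmorph1; ring.
  by rewrite !rpredB.
have -> : 'i * (x - y) = p + 'i * x + 'i^* * (y + 'i * q) - p - q.
  have i2 : 'i * 'i = -1 :> algC by rewrite -expr2 sqrCi.
  by rewrite conjCi; ring: i2.
by rewrite !rpredB.
Qed.

Lemma block_form_isotropic F v w :
  block_psd F -> block_form F v v = 0 -> block_form F v w = 0.
Proof.
move=> F_psd v_null; set a := block_form F v w.
have w_v : block_form F w v = a^* by rewrite -block_form_conj ?conjCK.
suff /eqP : a * a^* *+ 2 = 0 by rewrite mulrn_eq0 /= mul_conjC_eq0 => /eqP.
apply: (@quadratic_ge0_lin_coef_eq0 _ (a * a^* * block_form F w w)).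
  by rewrite mulr_ge0 ?mul_conjC_ge0 //; exact: (F_psd w).
move=> x /CrealP x_real; pose u := vcomb v w (x * a^*).
have -> : x * (a * a^* *+ 2) + x * x * (a * a^* * block_form F w w) = block_form F u u.
  by rewrite /u block_form_comb v_null w_v rmorphM /= conjCK x_real mulr2n -/a; ring.
exact: (F_psd u).
Qed.

Lemma block_form_rank1 F (sigma : ('I_k -> 'cV[algC]_n) -> algC) u :
  block_psd F ->
  (forall v1 v2 a, sigma (vcomb v1 v2 a) = sigma v1 + a * sigma v2) ->
  sigma u = 1 -> (forall v, sigma v = 0 -> block_form F v v = 0) ->
  forall v w, block_form F v w = (sigma v)^* * sigma w * block_form F u u.
Proof.
move=> F_psd sigma_lin sigma_u null_ker.
have factor_left v z : block_form F v z = (sigma v)^* * block_form F u z.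
  have v_ker : sigma (vcomb v u (- sigma v)) = 0.
    by rewrite sigma_lin sigma_u mulr1 subrr.
  have := block_form_isotropic z F_psd (null_ker _ v_ker).
  by rewrite block_form_combl rmorphN mulNr => /subr0_eq.
have uu_real : block_form F u u \is Num.real by apply/ger0_real/F_psd.
move=> v w; rewrite factor_left -mulrA; congr (_ * _).
by rewrite -block_form_conj // factor_left rmorphM /= conjCK (CrealP uu_real).
Qed.

Definition bvec (i : 'I_k) (a : 'I_n) : 'I_k -> 'cV[algC]_n :=
  fun i' => if i' == i then delta_mx a 0 else 0.

Lemma block_form_bvec F i a j b : block_form F (bvec i a) (bvec j b) = F i j a b.
Proof.
rewrite /block_form (bigD1 i) //= [X in _ + X]big1 => [|i' ne_i'i]; last first.
  by apply: big1 => j' _; rewrite /bvec (negbTE ne_i'i) mxadj0 !mul0mx mxE.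
rewrite addr0 (bigD1 j) //= [X in _ + X]big1 => [|j' ne_j'j]; last first.
  by rewrite /bvec (negbTE ne_j'j) mulmx0 mxE.
by rewrite addr0 /bvec !eqxx mxadj_delta -rowE -colE !mxE.
Qed.

Lemma block_form_null_dominated F G (A : 'I_k -> 'I_k -> 'M[algC]_n) (t : algC) v :
  block_psd F -> block_psd G -> 0 < t -> t <= 1 ->
  (forall i j, A i j = t *: F i j + (1 - t) *: G i j) ->
  block_form A v v = 0 -> block_form F v v = 0.
Proof.
move=> F_psd G_psd t_gt0 t_le1 decA.
rewrite (eq_block_form _ _ decA) block_formDZ => /eqP.
rewrite paddr_eq0 ?mulr_ge0 ?subr_ge0 ?(ltW t_gt0) //; last 2 first.
- exact: (F_psd v).
- exact: (G_psd v).
by case/andP; rewrite mulf_eq0 (gt_eqF t_gt0) => /eqP.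
Qed.

End BlockForm.

Section Sandwich.
Variable n : nat.
Implicit Types (S X : 'M[algC]_n) (v w : 'I_n -> 'cV[algC]_n).

Definition sandwich S X := S *m X *m S.

Definition choi (f : 'M[algC]_n -> 'M[algC]_n) i j : 'M[algC]_n := f (delta_mx i j).

Definition sandwich_coef S v : algC := \sum_(j < n) (S *m v j) j ord0.
Definition sandwich_coef_adj S v : algC := \sum_(i < n) (mxadj (v i) *m S) ord0 i.

Lemma sandwich_coef_comb S v1 v2 a :
  sandwich_coef S (vcomb v1 v2 a) = sandwich_coef S v1 + a * sandwich_coef S v2.
Proof.
rewrite /sandwich_coef mulr_sumr -big_split; apply: eq_bigr => j _.
by rewrite /vcomb mulmxDr -scalemxAr !mxE.
Qed.

Lemma sandwich_coef_bvec S j b : sandwich_coef S (bvec j b) = S j b.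
Proof.
rewrite /sandwich_coef (bigD1 j) //= big1 => [|j' ne_j'j]; last first.
  by rewrite /bvec (negbTE ne_j'j) mulmx0 mxE.
by rewrite addr0 /bvec eqxx -colE mxE.
Qed.

Lemma block_form_choi_sandwich S v w :
  block_form (choi (sandwich S)) v w = sandwich_coef_adj S v * sandwich_coef S w.
Proof.
rewrite /block_form big_distrl; apply: eq_bigr => i _.
rewrite big_distrr; apply: eq_bigr => j _.
by rewrite /choi /sandwich !mulmxA -(mulmxA _ S (w j)) mulmx_delta_mxE.
Qed.

End Sandwich.

Lemma choi_sandwich_extreme n (S : 'M[algC]_n) (F G : 'I_n -> 'I_n -> 'M[algC]_n) t :
  S != 0 -> block_psd F -> block_psd G -> 0 < t -> t < 1 ->
  (forall i j, choi (sandwich S) i j = t *: F i j + (1 - t) *: G i j) ->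
  exists c, forall i j, F i j = c *: choi (sandwich S) i j.
Proof.
(* The form of [A] vanishes on the hyperplane [sandwich_coef S v = 0], hence so
   does the dominated form of [F]; both are then rank one with the same kernel. *)
move=> S_neq0 F_psd G_psd t_gt0 t_lt1 decA; pose A := choi (sandwich S).
have A_psd : block_psd A.
  move=> v; rewrite -/(block_form A v v) (eq_block_form _ _ decA) block_formDZ.
  by rewrite addr_ge0 ?mulr_ge0 ?subr_ge0 ?(ltW t_gt0) ?(ltW t_lt1) //;
    [exact: (F_psd v) | exact: (G_psd v)].
have A_null v : sandwich_coef S v = 0 -> block_form A v v = 0.
  by move=> v_ker; rewrite block_form_choi_sandwich v_ker mulr0.
have F_null v : sandwich_coef S v = 0 -> block_form F v v = 0.
  move=> v_ker; apply: (block_form_null_dominated F_psd G_psd t_gt0 (ltW t_lt1) decA).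
  exact: A_null.
have [[j b] /= Sjb_neq0] : exists p : 'I_n * 'I_n, S p.1 p.2 != 0.
  apply/existsP; apply: contraR S_neq0 => /existsPn S0.
  by apply/eqP/matrixP => a b; have := S0 (a, b); rewrite negbK mxE => /eqP.
pose u := vcomb (fun _ => 0) (bvec j b) (S j b)^-1.
have coef_u : sandwich_coef S u = 1.
  rewrite sandwich_coef_comb sandwich_coef_bvec mulVf // [X in X + _]big1 ?add0r //.
  by move=> i _; rewrite mulmx0 mxE.
have rank1F := block_form_rank1 F_psd (sandwich_coef_comb S) coef_u F_null.
have rank1A := block_form_rank1 A_psd (sandwich_coef_comb S) coef_u A_null.
have Auu_neq0 : block_form A u u != 0.
  apply: contraNneq (mulf_neq0 Sjb_neq0 Sjb_neq0) => Auu0.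
  have -> : S j b * S j b = block_form A (bvec b j) (bvec j b).
    by rewrite block_form_bvec /A /choi /sandwich mulmx_delta_mxE.
  by rewrite rank1A Auu0 mulr0.
exists (block_form F u u / block_form A u u) => i i'; apply/matrixP => a a'.
rewrite mxE -(block_form_bvec F) -[choi _ i i' a a'](block_form_bvec A).
by rewrite rank1F (rank1A (bvec i a)) mulrCA divfK.
Qed.

Lemma psd_block_psd n (S : 'M[algC]_n) : psd S -> block_psd (fun _ _ : 'I_1 => S).
Proof. by move=> S_psd v; rewrite !big_ord1; apply: S_psd. Qed.

Lemma psd_mxadj n (S : 'M[algC]_n) : psd S -> mxadj S = S.
Proof.
move=> /psd_block_psd S_psd; apply/matrixP => a b; rewrite !mxE.
rewrite -[S a b](block_form_bvec (fun _ _ : 'I_1 => S) ord0 a ord0 b).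
by rewrite -[S b a](block_form_bvec (fun _ _ : 'I_1 => S) ord0 b ord0 a) block_form_conj.
Qed.

Section LinMap.
Variables (n : nat) (f : 'M[algC]_n -> 'M[algC]_n).
Hypothesis f_lin : lin_map f.

Lemma lin_map0 : f 0 = 0.
Proof.
by apply: (@addIr _ (f 0)); rewrite add0r -{1}(scale1r (f 0)) -f_lin scale1r addr0.
Qed.

Lemma lin_mapD X Y : f (X + Y) = f X + f Y.
Proof. by have := f_lin 1 X Y; rewrite !scale1r. Qed.

Lemma lin_mapZ a X : f (a *: X) = a *: f X.
Proof. by have := f_lin a X 0; rewrite !addr0 lin_map0 addr0. Qed.

Lemma lin_map_sum (I : Type) (r : seq I) (P : pred I) (g : I -> 'M[algC]_n) :
  f (\sum_(i <- r | P i) g i) = \sum_(i <- r | P i) f (g i).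
Proof. exact: (big_morph f lin_mapD lin_map0). Qed.

End LinMap.

Lemma eq_lin_map_delta n (f g : 'M[algC]_n -> 'M[algC]_n) :
  lin_map f -> lin_map g -> (forall i j, f (delta_mx i j) = g (delta_mx i j)) ->
  forall X, f X = g X.
Proof.
move=> f_lin g_lin fg_delta X; rewrite (matrix_sum_delta X) !lin_map_sum //.
apply: eq_bigr => i _; rewrite !lin_map_sum //.
by apply: eq_bigr => j _; rewrite !lin_mapZ // fg_delta.
Qed.

Lemma lin_map_sandwich n (S : 'M[algC]_n) : lin_map (sandwich S).
Proof. by move=> a X Y; rewrite /sandwich mulmxDr mulmxDl -scalemxAr -scalemxAl. Qed.

Lemma lin_map_scale n (f : 'M[algC]_n -> 'M[algC]_n) (r : algC) :
  lin_map f -> lin_map (fun X => r *: f X).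
Proof. by move=> f_lin a X Y; rewrite f_lin scalerDr !scalerA mulrC. Qed.

Lemma block_formZ k n (F : 'I_k -> 'I_k -> 'M[algC]_n) (r : algC) v w :
  block_form (fun i j => r *: F i j) v w = r * block_form F v w.
Proof.
rewrite /block_form mulr_sumr; apply: eq_bigr => i _.
by rewrite mulr_sumr; apply: eq_bigr => j _; rewrite -scalemxAr -scalemxAl mxE.
Qed.

Lemma block_form_sandwich k n (S : 'M[algC]_n) (B : 'I_k -> 'I_k -> 'M[algC]_n) v w :
  mxadj S = S ->
  block_form (fun i j => sandwich S (B i j)) v w =
  block_form B (fun i => S *m v i) (fun j => S *m w j).
Proof.
move=> S_herm; apply: eq_bigr => i _; apply: eq_bigr => j _.
by rewrite mxadjM S_herm /sandwich !mulmxA.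
Qed.

Lemma CP_sandwich n (S : 'M[algC]_n) : mxadj S = S -> CP (sandwich S).
Proof.
move=> S_herm; split=> [|k B B_psd v]; first exact: lin_map_sandwich.
by rewrite -/(block_form _ v v) block_form_sandwich //; apply: B_psd.
Qed.

Lemma CP_scale n (f : 'M[algC]_n -> 'M[algC]_n) (r : algC) :
  0 <= r -> CP f -> CP (fun X => r *: f X).
Proof.
move=> r_ge0 [f_lin f_pos]; split=> [|k B B_psd v]; first exact: lin_map_scale.
rewrite -/(block_form _ v v) block_formZ mulr_ge0 //.
exact: (f_pos _ _ B_psd v).
Qed.

Lemma choi_id_psd n : block_psd (choi (fun X : 'M[algC]_n => X)).
Proof.
move=> v; rewrite -/(block_form _ v v).
have -> : block_form (choi id) v v =
    (\sum_(i < n) v i i ord0)^* * \sum_(j < n) v j j ord0.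
  rewrite rmorph_sum big_distrl; apply: eq_bigr => i _.
  by rewrite big_distrr; apply: eq_bigr => j _; rewrite mulmx_delta_mxE !mxE.
by rewrite mulrC mul_conjC_ge0.
Qed.

Lemma CP_choi_psd n (f : 'M[algC]_n -> 'M[algC]_n) : CP f -> block_psd (choi f).
Proof. by case=> _ f_pos; apply: f_pos (@choi_id_psd n). Qed.

Lemma CP_sandwich_extreme n (S : 'M[algC]_n) (f g : 'M[algC]_n -> 'M[algC]_n) t :
  S != 0 -> CP f -> CP g -> 0 < t -> t < 1 ->
  (forall X, sandwich S X = t *: f X + (1 - t) *: g X) ->
  exists c, forall X, f X = c *: sandwich S X.
Proof.
move=> S_neq0 f_CP g_CP t_gt0 t_lt1 dec.
have [c f_choi] := choi_sandwich_extreme S_neq0 (CP_choi_psd f_CP)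
  (CP_choi_psd g_CP) t_gt0 t_lt1 (fun i j => dec (delta_mx i j)).
exists c; exact: eq_lin_map_delta f_CP.1 (lin_map_scale c (lin_map_sandwich S)) f_choi.
Qed.

Lemma mx_eq1_of_mxtrace n (A : 'M[algC]_n) :
  (forall X : 'M[algC]_n, \tr (X *m A) = \tr X) -> A = 1%:M.
Proof.
move=> trA; apply/matrixP => a b.
have := trA (delta_mx b a).
rewrite -(mul_delta_mx (0 : 'I_1)) mxtrace_mulC mulmxA mxtrace_mulC.
rewrite mulmxA -rowE -colE [\tr (delta_mx b 0 *m _)]mxtrace_mulC mul_delta_mx_cond.
rewrite /mxtrace !big_ord1 !mxE => ->.
by case: (a == b); rewrite ?mulr0n ?mulr1n ?mxE.
Qed.

Lemma mxtrace_sum_sandwich n M (S P : 'I_M -> 'M[algC]_n) (a : 'I_M -> algC) X :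
  (forall i, S i *m S i = P i) ->
  \tr (\sum_(i < M) a i *: sandwich (S i) X) = \tr (X *m \sum_(i < M) a i *: P i).
Proof.
move=> SS; rewrite mulmx_sumr !raddf_sum; apply: eq_bigr => i _.
by rewrite -scalemxAr /= !mxtraceZ -SS /sandwich mxtrace_mulC mulmxA mxtrace_mulC mulmxA.
Qed.

Lemma exists_small_scale M (r : 'I_M -> algC) :
  exists2 e : algC, 0 < e & forall i, `|e * r i| <= 1.
Proof.
pose K := 1 + \sum_(i < M) `|r i|.
have K_gt0 : 0 < K by rewrite ltr_pwDl ?sumr_ge0.
exists K^-1 => [|i]; first by rewrite invr_gt0.
rewrite normrM gtr0_norm ?invr_gt0 // ler_pdivrMl // mulr1.
by rewrite /K (bigD1 i) //= addrCA lerDl addr_ge0 ?sumr_ge0.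
Qed.

Lemma real_norm_le1_ge0 (x : algC) : x \is Num.real -> `|x| <= 1 -> 0 <= 1 + x.
Proof. by move=> x_real; rewrite real_ler_norml // -sub0r lerBlDr addrC => /andP[]. Qed.

Section SquareRootInstrument.
Variables (n M : nat) (P S : 'I_M -> 'M[algC]_n).
Hypotheses (P_POVM : POVM P) (P_neq0 : forall i, P i != 0).
Hypothesis S_sqrt : forall i, psd (S i) /\ S i *m S i = P i.

Let S_herm i : mxadj (S i) = S i := psd_mxadj (S_sqrt i).1.
Let SS i : S i *m S i = P i := (S_sqrt i).2.

Lemma instrument_scaled_sandwich (a : 'I_M -> algC) :
  (forall i, 0 <= a i) -> \sum_(i < M) a i *: P i = 1%:M ->
  instrument (fun i X => a i *: sandwich (S i) X).
Proof.
move=> a_ge0 a_POVM; split=> [i|X]; first exact: CP_scale (a_ge0 i) (CP_sandwich (S_herm i)).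
by rewrite (mxtrace_sum_sandwich a X SS) a_POVM mulmx1.
Qed.

Lemma instrument_sandwich : instrument (fun i => sandwich (S i)).
Proof.
split=> [i|X]; first exact: CP_sandwich (S_herm i).
have := mxtrace_sum_sandwich (fun=> 1) X SS.
under eq_bigr do rewrite scale1r; under [in RHS]eq_bigr do rewrite scale1r.
by rewrite P_POVM.2 mulmx1.
Qed.

Lemma lin_indep_extremal_sandwich :
  lin_indep P -> extremal_instrument (fun i => sandwich (S i)).
Proof.
move=> P_indep; split=> [|N1 N2 t [N1_CP N1_TP] [N2_CP _] t_gt0 t_lt1 dec].
  exact: instrument_sandwich.
have S_neq0 i : S i != 0 by apply: contraNneq (P_neq0 i) => S0; rewrite -SS S0 mul0mx.
have /fin_all_exists [c N1_c] :
    forall i, exists c : algC, forall X, N1 i X = c *: sandwich (S i) X.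
  move=> i; exact: CP_sandwich_extreme (S_neq0 i) (N1_CP i) (N2_CP i) t_gt0 t_lt1 (dec i).
have c_POVM : \sum_(i < M) c i *: P i = 1%:M.
  apply: mx_eq1_of_mxtrace => X; rewrite -(mxtrace_sum_sandwich c X SS) -(N1_TP X).
  by congr (\tr _); apply: eq_bigr => i _; rewrite N1_c.
have c1 i : c i = 1.
  apply/eqP; rewrite -subr_eq0; apply/eqP; move: i; apply: P_indep.
  under eq_bigr do rewrite scalerBl scale1r.
  by rewrite sumrB c_POVM P_POVM.2 subrr.
have N1_N i X : N1 i X = sandwich (S i) X by rewrite N1_c c1 scale1r.
move=> i X; split; first exact: N1_N.
have t1_neq0 : 1 - t != 0 by rewrite subr_eq0 eq_sym lt_eqF.
apply: (scalerI t1_neq0); apply: (@addrI _ (t *: N1 i X)).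
by rewrite -dec N1_N -{1}(scale1r (sandwich _ _)) -scalerDl addrC subrK.
Qed.

Lemma extremal_sandwich_real_lin_indep :
  extremal_instrument (fun i => sandwich (S i)) ->
  forall r : 'I_M -> algC, (forall i, r i \is Num.real) ->
  \sum_(i < M) r i *: P i = 0 -> forall i, r i = 0.
Proof.
move=> [_ extremal] r r_real r_null.
have [e e_gt0 small] := exists_small_scale r.
pose N (s : algC) i X := (1 + s * (e * r i)) *: sandwich (S i) X.
have N_instrument s : s \is Num.real -> `|s| = 1 -> instrument (N s).
  move=> s_real s_norm; apply: instrument_scaled_sandwich => [i|].
    apply: real_norm_le1_ge0; first by rewrite realM // realM // gtr0_real.
    by rewrite normrM s_norm mul1r small.
  under eq_bigr do rewrite scalerDl scale1r -!scalerA.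
  by rewrite big_split /= -scaler_sumr -scaler_sumr r_null !scaler0 addr0 P_POVM.2.
have half_gt0 : (0 : algC) < 2^-1 by rewrite invr_gt0 ltr0n.
have half_lt1 : (2 : algC)^-1 < 1 by rewrite invf_lt1 ?ltr0n // ltr1n.
have mid i X : sandwich (S i) X = 2^-1 *: N 1 i X + (1 - 2^-1) *: N (-1) i X.
  have two_neq0 : (2 : algC) != 0 by rewrite pnatr_eq0.
  by rewrite /N !scalerA -scalerDl -[LHS]scale1r; congr (_ *: _); field.
move=> i; have [+ _] := extremal _ _ _ (N_instrument 1 (rpred1 _) (normr1 _))
  (N_instrument (-1) (rpredN1 _) (normrN1 _)) half_gt0 half_lt1 mid i 1%:M.
rewrite /N /sandwich mulmx1 SS mul1r scalerDl scale1r => /(canRL (addKr _)).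
rewrite addNr => /eqP; rewrite scaler_eq0 (negbTE (P_neq0 i)) orbF mulf_eq0.
by rewrite (gt_eqF e_gt0) => /eqP.
Qed.

Lemma extremal_sandwich_lin_indep :
  extremal_instrument (fun i => sandwich (S i)) -> lin_indep P.
Proof.
move=> extremal c c_null i.
have P_herm j : mxadj (P j) = P j := psd_mxadj (P_POVM.1 j).
have conj_null : \sum_(j < M) (c j)^* *: P j = 0.
  have := congr1 (@mxadj _ _) c_null.
  rewrite mxadj0 (big_morph _ (@mxadjD _ _) (@mxadj0 _ _)).
  by under eq_bigr do rewrite mxadjZ P_herm.
have real_null := extremal_sandwich_real_lin_indep extremal.
have re_null : c i + (c i)^* = 0.
  apply: (real_null (fun j => c j + (c j)^*)) => [j|].
    by apply/CrealP; rewrite rmorphD /= conjCK addrC.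
  by under eq_bigr do rewrite scalerDl; rewrite big_split /= c_null conj_null addr0.
have im_null : 'i * (c i - (c i)^*) = 0.
  apply: (real_null (fun j => 'i * (c j - (c j)^*))) => [j|].
    by apply/CrealP; rewrite rmorphM rmorphB /= conjCi conjCK mulNr -mulrN opprB.
  under eq_bigr do rewrite -scalerA scalerBl.
  by rewrite -scaler_sumr sumrB c_null conj_null subrr scaler0.
have diff_null : c i - (c i)^* = 0.
  by move/eqP: im_null; rewrite mulf_eq0 (negbTE (neq0Ci _)) => /eqP.
have two_neq0 : (2 : algC) != 0 by rewrite pnatr_eq0.
have -> : c i = ((c i + (c i)^*) + (c i - (c i)^*)) / 2 by field.
by rewrite re_null diff_null addr0 mul0r.
Qed.

End SquareRootInstrument.

Lemma lin_indep_orthogonal n M (P : 'I_M -> 'M[algC]_n) :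
  (forall i, P i != 0) -> (forall i j, P i *m P j = if i == j then P i else 0) ->
  lin_indep P.
Proof.
move=> P_neq0 P_orth c c_null i.
have : (\sum_(j < M) c j *: P j) *m P i = 0 by rewrite c_null mul0mx.
rewrite mulmx_suml (bigD1 i) //= big1 => [|j ne_ji]; last first.
  by rewrite -scalemxAl P_orth (negbTE ne_ji) scaler0.
rewrite addr0 -scalemxAl P_orth eqxx => /eqP.
by rewrite scaler_eq0 (negbTE (P_neq0 i)) orbF => /eqP.
Qed.

Theorem mainTheorem17 :
  (forall (n M : nat) (P S : 'I_M -> 'M[algC]_n),
      POVM P -> (forall i, P i != 0) ->
      (forall i, psd (S i) /\ S i *m S i = P i) ->
      (extremal_instrument (fun i (rho : 'M[algC]_n) => S i *m rho *m S i)
       <-> lin_indep P))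
  /\
  (forall (n M : nat) (P : 'I_M -> 'M[algC]_n),
      POVM P -> (forall i, P i != 0) ->
      (forall i j, P i *m P j = if i == j then P i else 0) ->
      extremal_instrument (fun i (rho : 'M[algC]_n) => P i *m rho *m P i)).
Proof.
split=> [n M P S P_POVM P_neq0 S_sqrt | n M P P_POVM P_neq0 P_orth].
  split; [exact: extremal_sandwich_lin_indep | exact: lin_indep_extremal_sandwich].
have P_sqrt i : psd (P i) /\ P i *m P i = P i.
  by rewrite P_orth eqxx; split=> //; exact: P_POVM.1.
exact: lin_indep_extremal_sandwich P_POVM P_neq0 P_sqrt
  (lin_indep_orthogonal P_neq0 P_orth).
Qed.
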